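(* Fix a history of blocks $H$, and let $r\ge 0$ be the EIP-1559 burning fee per unit of size for the current slot. Consider the Double TFM with all transactions of the same size $s>0$. Assume (i) users cannot overbid, i.e. every bid $(\delta^{CM}_t,\delta^{BP}_t,c_t)$ satisfies $c_t\le v_t$; (ii) the burning fee is not excessively low, i.e. the total size of all transactions $t$ in the mempool with $v_t\ge r$ does not exceed the block capacity; and (iii) every includer and the block producer (of every type) follow the indicated allocation rules and add no fake transactions. Then for every user with value $v_t$, the bid $$b_t=(\delta^{CM}_t,\delta^{BP}_t,c_t)=\bigl(0,\ \mu^{Cost}_{BP},\ \min\{v_t,\ r+\mu^{Cost}_{BP}\}\bigr)$$ is a dominant strategy (it maximizes the user's utility for every choice of the other users' bids), irrespective of the user's beliefs about the other parties.
   Context: Model: in one slot there are users, $m$ includers with distinct orders $1,\dots,m$ (order $1$ is best), and one block producer. Each user has a transaction $t$ of size $s$ with private value $v_t$ per unit of size. An includer chooses an inclusion list (at most $c_{Incl}$ transactions) from the mempool; the block producer, seeing the inclusion lists, builds a block (at most $c_{block}$ transactions). Every transaction in the block pays the burning fee $r\cdot s$. The block producer incurs a cost $\mu^{Cost}_{BP}\ge 0$ per unit of size for every user transaction in its block; each includer incurs a cost $\mu^{Cost}_{CM}\ge0$ per unit of size for every user transaction in its list. Double TFM: a bid is $b_t=(\delta^{CM}_t,\delta^{BP}_t,c_t)$, where $c_t$ is the maximum total amount per unit of size the user pays. The block producer fee of $t$ is $\max\{\min\{\delta^{BP}_t s,\ c_t s-rs\},0\}$, paid to the block producer whenever $t$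 is in the block. The committee fee of $t$ is $\max\{\min\{\delta^{CM}_t s,\ c_t s-rs-\min\{\delta^{BP}_t s, c_t s-rs\}\},0\}$, paid entirely to the includer of smallest order that put $t$ in its inclusion list, and only if $t$ is in the block (otherwise not paid). A user whose transaction is in the (approved) block gets utility $(v_t - r)s$ minus the fees paid; otherwise utility $0$. Indicated allocation rules. Block producer: among transactions with $c_t\ge r+\mu^{Cost}_{BP}$ and $\delta^{BP}_t\ge \mu^{Cost}_{BP}$, include those with the highest block producer fee (deterministic tie-breaking) until the block is full or none remain. Includer of order $j$: compute the set $S$ of transactions the block producer following its rule would include; discard from $S$ transactions whose committee fee is below $\mu^{Cost}_{CM} s$; sort the rest by committee fee in decreasing order (deterministic tie-breaking); includers of order $1,2,\dots$ successively take the next $c_{Incl}$ transactions, and includer $j$ includes its block of positions $(j-1)c_{Incl}+1,\dots,j c_{Incl}$. *)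

From HB Require Import structures.
From mathcomp Require Import all_boot all_order all_algebra.
Set Implicit Arguments. Unset Strict Implicit. Unset Printing Implicit Defensive.
Import Order.TTheory GRing.Theory Num.Theory.
Local Open Scope ring_scope.

(* A bid (delta^CM, delta^BP, c), all per unit of size. *)
Record bid (R : realFieldType) := Bid { dCM : R; dBP : R; cap : R }.

Section DoubleTFM.
Variable R : realFieldType.

Definition bp_fee (r s : R) (b : bid R) : R :=
  Num.max (Num.min (dBP b * s) (cap b * s - r * s)) 0.

Definition cm_fee (r s : R) (b : bid R) : R :=
  Num.max (Num.min (dCM b * s)
     (cap b * s - r * s - Num.min (dBP b * s) (cap b * s - r * s))) 0.

Variable n : nat.

Definition bp_eligible (r muBP : R) (b : 'I_n -> bid R) : {set 'I_n} :=
  [set t | (r + muBP <= cap (b t)) && (muBP <= dBP (b t))].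

Definition bp_rule (r s muBP : R) (cblock : nat) (b : 'I_n -> bid R)
    (B : {set 'I_n}) : Prop :=
  exists srt : seq 'I_n,
    [/\ perm_eq srt (enum (bp_eligible r muBP b)),
        sorted (fun x y => bp_fee r s (b y) <= bp_fee r s (b x)) srt
      & B = [set x in take cblock srt]].

(* L : 'I_m -> {set 'I_n} are the inclusion lists produced by the includers
   (index j : 'I_m is the includer of order j+1) following the indicated
   rule, where S is the set the block producer would include. *)
Definition incl_rule (r s muCM : R) (m cIncl : nat) (b : 'I_n -> bid R)
    (S : {set 'I_n}) (L : 'I_m -> {set 'I_n}) : Prop :=
  exists srt : seq 'I_n,
    [/\ perm_eq srt (enum [set t in S | muCM * s <= cm_fee r s (b t)]),
        sorted (fun x y => cm_fee r s (b y) <= cm_fee r s (b x)) srt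
      & forall j : 'I_m, L j = [set x in take cIncl (drop (j * cIncl) srt)]].

Definition utility (r s : R) (m : nat) (v : 'I_n -> R)
    (blk : ('I_n -> bid R) -> {set 'I_n})
    (incl : ('I_n -> bid R) -> 'I_m -> {set 'I_n})
    (b : 'I_n -> bid R) (i : 'I_n) : R :=
  if i \in blk b then
    (v i - r) * s - bp_fee r s (b i)
      - (if [exists j, i \in incl b j] then cm_fee r s (b i) else 0)
  else 0.

Definition upd (b : 'I_n -> bid R) (i : 'I_n) (x : bid R) : 'I_n -> bid R :=
  fun t => if t == i then x else b t.

End DoubleTFM.

(* A user's utility can never exceed max(0, (v - r - muBP) s): the block
   producer only includes bids paying it at least muBP per unit of size on
   top of the burning fee, and the committee fee is nonnegative.  The bid
   (0, muBP, min(v, r + muBP)) attains this bound: when no one overbids, the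
   low-burning-fee assumption makes every eligible transaction fit in the
   block, so the bid is included exactly when v >= r + muBP, and then it pays
   exactly r + muBP per unit and no committee fee. *)

From HB Require Import structures.
From mathcomp Require Import all_boot all_order all_algebra.
From mathcomp Require Import lra.
Import Order.TTheory GRing.Theory Num.Theory.
Local Open Scope ring_scope.
Set Implicit Arguments.
Unset Strict Implicit.
Unset Printing Implicit Defensive.

Section Fees.
Variables (R : realFieldType) (r s : R).

Lemma cm_fee_ge0 (b : bid R) : 0 <= cm_fee r s b.
Proof. by rewrite /cm_fee le_max lexx orbT. Qed.

Lemma cm_fee_dCM0 (b : bid R) : dCM b = 0 -> cm_fee r s b = 0.
Proof.
move=> hb; rewrite /cm_fee hb mul0r.
have hrest : 0 <= cap b * s - r * s - Num.min (dBP b * s) (cap b * s - r * s).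
  by rewrite subr_ge0 ge_min lexx orbT.
by rewrite (min_idPl hrest) maxxx.
Qed.

Lemma bp_fee_ge (mu : R) (b : bid R) : 0 < s ->
  r + mu <= cap b -> mu <= dBP b -> mu * s <= bp_fee r s b.
Proof.
move=> s0 hcap hdBP; rewrite /bp_fee le_max le_min ler_pM2r // -mulrBl.
by rewrite ler_pM2r // lerBrDl hdBP hcap.
Qed.

Lemma bp_fee_exact (mu : R) : 0 <= mu -> 0 < s ->
  bp_fee r s (Bid 0 mu (r + mu)) = mu * s.
Proof.
move=> mu0 s0; rewrite /bp_fee /= -mulrBl [r + mu]addrC addrK minxx.
by apply/max_idPl; rewrite mulr_ge0 // ltW.
Qed.

End Fees.

Section BlockProducerRule.
Variables (R : realFieldType) (n : nat) (r s muBP : R) (cblock : nat).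
Variables (b : 'I_n -> bid R) (B : {set 'I_n}).
Hypothesis hrule : bp_rule r s muBP cblock b B.

Lemma bp_rule_eligible x : x \in B -> x \in bp_eligible r muBP b.
Proof.
case: hrule => srt [hperm _ ->]; rewrite inE => /mem_take.
by rewrite (perm_mem hperm) mem_enum.
Qed.

Lemma bp_rule_all_eligible x : (#|bp_eligible r muBP b| <= cblock)%N ->
  x \in bp_eligible r muBP b -> x \in B.
Proof.
case: hrule => srt [hperm _ ->] hcard hx; rewrite inE take_oversize.
  by rewrite (perm_mem hperm) mem_enum.
by rewrite (perm_size hperm) -cardE.
Qed.

End BlockProducerRule.

Lemma card_bp_eligible_le (R : realFieldType) n (r muBP : R)
    (v : 'I_n -> R) (b : 'I_n -> bid R) :
  0 <= muBP -> (forall t, cap (b t) <= v t) ->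
  (#|bp_eligible r muBP b| <= #|[set t | (r <= v t)%R]|)%N.
Proof.
move=> mu0 hb; apply/subset_leq_card/subsetP => t; rewrite !inE => /andP[hc _].
by apply: le_trans (hb t); apply: le_trans hc; rewrite lerDl.
Qed.

Lemma upd_eq (R : realFieldType) n (b : 'I_n -> bid R) i x : upd b i x i = x.
Proof. by rewrite /upd eqxx. Qed.

Section Utility.
Variables (R : realFieldType) (n m cblock : nat) (r s muBP : R).
Variables (v : 'I_n -> R) (blk : ('I_n -> bid R) -> {set 'I_n}).
Variable incl : ('I_n -> bid R) -> 'I_m -> {set 'I_n}.
Hypothesis s_gt0 : 0 < s.
Hypothesis hbp : forall b, bp_rule r s muBP cblock b (blk b).

Definition dominant_bid (vi : R) : bid R := Bid 0 muBP (Num.min vi (r + muBP)).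

Lemma utility_le_surplus b i :
  utility r s v blk incl b i <= Num.max 0 ((v i - r - muBP) * s).
Proof.
rewrite /utility le_max; case: ifP => [hin|]; last by rewrite lexx.
have /andP[hcap hdBP] : (r + muBP <= cap (b i)) && (muBP <= dBP (b i)).
  by have := bp_rule_eligible (hbp b) hin; rewrite inE.
set cm := if _ then _ else _.
have hcm : 0 <= cm by rewrite /cm; case: ifP => _; rewrite ?cm_fee_ge0.
have hbf := bp_fee_ge s_gt0 hcap hdBP.
apply/orP; right; move: hcm hbf; rewrite !mulrBl; lra.
Qed.

Lemma utility_dominant_bid b i :
  0 <= muBP -> (#|[set t | (r <= v t)%R]| <= cblock)%N ->
  (forall t, t != i -> cap (b t) <= v t) ->
  utility r s v blk incl (upd b i (dominant_bid (v i))) i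
    = Num.max 0 ((v i - r - muBP) * s).
Proof.
move=> mu0 hcard hb; set b' := upd b i _.
rewrite /utility; case: (leP (r + muBP) (v i)) => hv.
- have hmin : Num.min (v i) (r + muBP) = r + muBP by apply/min_idPr.
  have hb' : forall t, cap (b' t) <= v t.
    move=> t; rewrite /b' /upd; case: eqP => [->|/eqP]; last exact: hb.
    by rewrite /= ge_min lexx.
  have -> : i \in blk b'.
    apply: (bp_rule_all_eligible (hbp b')).
      exact: leq_trans (card_bp_eligible_le r mu0 hb') hcard.
    by rewrite inE /b' upd_eq /= hmin !lexx.
  rewrite /b' upd_eq /dominant_bid hmin bp_fee_exact // cm_fee_dCM0 // if_same.
  rewrite subr0 -mulrBl -addrA -opprD; apply/esym/max_idPr.
  by rewrite mulr_ge0 ?subr_ge0 // ltW.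
- have -> : i \in blk b' = false.
    apply/negbTE/negP => /(bp_rule_eligible (hbp b')); rewrite inE /b' upd_eq /=.
    by rewrite le_min leNgt hv.
  rewrite -addrA -opprD; apply/esym/max_idPl.
  by rewrite mulr_le0_ge0 ?subr_le0 // ltW.
Qed.

End Utility.

Theorem mainTheorem1 (R : realFieldType) (n m cIncl cblock : nat)
    (r s muBP muCM : R) (v : 'I_n -> R)
    (blk : ('I_n -> bid R) -> {set 'I_n})
    (incl : ('I_n -> bid R) -> 'I_m -> {set 'I_n}) :
  0 <= r -> 0 < s -> 0 <= muBP -> 0 <= muCM ->
  (* (ii) burning fee not excessively low *)
  (#|[set t | r <= v t]|%:R * s <= cblock%:R * s) ->
  (* (iii) block producer and includers follow the indicated rules *)
  (forall b, bp_rule r s muBP cblock b (blk b)) ->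
  (forall b, incl_rule r s muCM cIncl b (blk b) (incl b)) ->
  forall (i : 'I_n) (b : 'I_n -> bid R),
  (* (i) other users cannot overbid *)
  (forall t, t != i -> cap (b t) <= v t) ->
  forall dev : bid R, cap dev <= v i ->
  utility r s v blk incl (upd b i dev) i
    <= utility r s v blk incl
         (upd b i (Bid 0 muBP (Num.min (v i) (r + muBP)))) i.
Proof.
(* The surplus bound holds for every deviation, overbidding included, and
   never involves the includers; hence the discarded hypotheses. *)
move=> _ s0 mu0 _ hcap hbp _ i b hb dev _.
have hcard : (#|[set t | (r <= v t)%R]| <= cblock)%N.
  by rewrite -(ler_nat R) -(ler_pM2r s0).
rewrite (utility_dominant_bid incl s0 hbp mu0 hcard hb).
exact: utility_le_surplus.
Qed.
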